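(* Let $G$ be a finite abelian group with a free Brauer action on the Brauer graph $(\Gamma,\mathfrak o,m)$, let $(\overline\Gamma,\overline{\mathfrak o},\overline m)$ be the Brauer orbit graph, and let $G$ act on the quiver $Q_\Gamma$ by the induced action. Then the orbit quiver $\overline{Q_\Gamma}$ is isomorphic to the quiver $Q_{\overline\Gamma}$ of the Brauer orbit graph, via the map sending the orbit of $v_i$ to $v_{\bar i}$ and the orbit of the arrow corresponding to ''$j$ is the successor of $i$ at $\mu$'' to the arrow corresponding to ''$\bar j$ is the successor of $\bar i$ at $\bar\mu$''.
   Context: Brauer graphs. A Brauer graph $(\Gamma,\mathfrak o,m)$ is a finite connected graph $\Gamma$ (loops and multiple edges allowed) with vertex set $\Gamma_0$, edge set $\Gamma_1$ and at least one edge, together with a multiplicity function $m:\Gamma_0\to\mathbb Z_{\ge 1}$ and, for each vertex $\mu$, a cyclic ordering $\mathfrak o$ of the edges incident with $\mu$. A loop at $\mu$ occurs twice in the cyclic ordering at $\mu$; its two occurrences are regarded as two distinct elements of $\Gamma_1$ (each with its own successor). Edge $j$ is the successor of edge $i$ at $\mu$ if $j$ immediately follows $i$ in the cyclic ordering at $\mu$. The valency $\operatorname{val}(\mu)$ is the number of edges incident with $\mu$, loops counted twice; if $\operatorname{val}(\mu)=1$ the unique edge at $\mu$ is its own successor. An edge $i$ is truncated at its endpoint $\mu$ if $\operatorname{val}(\mu)=1$ and $m(\mu)=1$. The quiver $Q_\Gamma$: if $\Gamma$ is a single non-loop edge whose two endpoints have multiplicity $1$, $Q_\Gamma$ has one vertex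 and one loop. Otherwise $Q_\Gamma$ has a vertex $v_i$ for each $i\in\Gamma_1$ and an arrow $v_i\to v_j$ for each vertex $\mu$ and each pair $(i,j)$ with $j$ the successor of $i$ at $\mu$ and $i$ not truncated at $\mu$. Brauer actions. Let $G$ be a finite abelian group. A Brauer action of $G$ on $(\Gamma,\mathfrak o,m)$ is a faithful action $x\mapsto x^g$ of $G$ on the graph $\Gamma$ (on vertices and edges, compatible with incidence) such that for all $g\in G$: if $j$ is the successor of $i$ at $\mu$ then $j^g$ is the successor of $i^g$ at $\mu^g$, and $m(\mu^g)=m(\mu)$. It is a free Brauer action if $G$ acts freely on $\Gamma_1$. For a free Brauer action, the Brauer orbit graph $(\overline\Gamma,\overline{\mathfrak o},\overline m)$ has as vertices the $G$-orbits $\bar\mu$ of vertices and as edges the $G$-orbits $\bar i$ of edges, $\bar i$ being incident with $\bar\mu$ when $i$ is incident with $\mu$; its cyclic ordering is given by: $\bar j$ is the successor of $\bar i$ at $\bar\mu$ whenever $j$ is the successor of $i$ at $\mu$; and $\overline m(\bar\mu)=\operatorname{val}(\mu)m(\mu)/\operatorname{val}(\bar\mu)$. Induced action and orbit quiver. A free Brauer action induces a free action of $G$ on $Q_\Gamma$: $v_i^g=v_{i^g}$, and the arrow corresponding to ''$j$ is the successor of $i$ at $\mu$'' is sent to the arrow corresponding to ''$j^g$ is the successor of $i^g$ at $\mu^g$''. The orbit quiver $\overline{Q_\Gamma}$ has as vertices the $G$-orbits of vertices of $Q_\Gamma$ and as arrows the $G$-orbits of arrows, the orbit of $a:v\to w$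 being an arrow from the orbit of $v$ to the orbit of $w$. *)

From HB Require Import structures.
From mathcomp Require Import all_boot all_order all_fingroup.
Set Implicit Arguments. Unset Strict Implicit. Unset Printing Implicit Defensive.

Local Open Scope group_scope.

(*   bV : vertices, bE : edges, bH : edge occurrences ("half-edges"):   *)
(*   every edge has exactly two occurrences (one at each endpoint, both  *)
(*   at the same vertex for a loop).  hv h / he h = vertex / edge of h.  *)
(*   succ h = the occurrence following h in the cyclic ordering at hv h. *)
Record bgraph := BGraph {
  bV : finType; bE : finType; bH : finType;
  hv : bH -> bV; he : bH -> bE; succ : bH -> bH; mult : bV -> nat }.

Definition valency (B : bgraph) (v : bV B) : nat := #|[set h | hv h == v]|.

Definition truncated (B : bgraph) (h : bH B) : bool :=
  (valency (hv h) == 1%N) && (mult (hv h) == 1%N).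

(* Gamma is a single non-loop edge with both endpoints of multiplicity 1 *)
Definition special (B : bgraph) : bool :=
  (#|bE B| == 1%N) && [forall h : bH B, truncated h].

Definition badj (B : bgraph) : rel (bV B) := fun u v =>
  [exists h : bH B, exists h' : bH B,
     [&& h != h', he h == he h', hv h == u & hv h' == v]].

Definition is_brauer (B : bgraph) : Prop :=
  (forall e : bE B, #|[set h | he h == e]| = 2%N) /\
  injective (@succ B) /\
  (forall h : bH B, hv (succ h) = hv h) /\
  (* the occurrences at a vertex form a single succ-cycle (cyclic ordering) *)
  (forall h h', hv h = hv h' -> fconnect (@succ B) h h') /\
  (forall v : bV B, exists h, hv h = v) /\
  (forall u v : bV B, connect (@badj B) u v) /\
  (0 < #|bE B|)%N /\
  (forall v : bV B, 0 < mult v)%N.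

Record quiver := Quiver { qV : finType; qA : finType; qs : qA -> qV; qt : qA -> qV }.

(* The quiver Q_Gamma: vertices v_i = edges i; one arrow v_{he h} -> v_{he (succ h)}
   for every non-truncated occurrence h; in the special case one loop (indexed
   by the unique edge). *)
Definition qarrT (B : bgraph) : finType :=
  ({h : bH B | ~~ truncated h} + {e : bE B | special B})%type.

Definition qsrcB (B : bgraph) (a : qarrT B) : bE B :=
  match a with inl h => he (val h) | inr e => val e end.
Definition qtgtB (B : bgraph) (a : qarrT B) : bE B :=
  match a with inl h => he (succ (val h)) | inr e => val e end.

Definition QB (B : bgraph) : quiver := @Quiver (bE B) (qarrT B) (@qsrcB B) (@qtgtB B).

Definition qarr (B : bgraph) (h : bH B) (Hh : ~~ truncated h) : qA (QB B) :=
  inl (exist _ h Hh).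

Definition orbq (T : finType) (O : T -> {set T}) : finType :=
  {A : {set T} | [exists x, A == O x]}.

Lemma orbq_in (T : finType) (O : T -> {set T}) (x : T) : [exists y, O x == O y].
Proof. by apply/existsP; exists x. Qed.

Definition po (T : finType) (O : T -> {set T}) (x : T) : orbq O :=
  exist _ (O x) (orbq_in O x).

Definition rep (T : finType) (O : T -> {set T}) (A : orbq O) : T :=
  xchoose (existsP (valP A)).

Definition orbf (gT : finGroupType) (T : finType) (f : T -> gT -> T) (G : {set gT})
  (x : T) : {set T} := [set f x g | g in G].

Definition is_act (gT : finGroupType) (T : finType) (G : {set gT}) (f : T -> gT -> T)
  : Prop :=
  (forall x, f x 1 = x) /\
  (forall x g k, g \in G -> k \in G -> f x (g * k) = f (f x g) k).

Definition free_brauer_action (gT : finGroupType) (G : {group gT}) (B : bgraph)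
  (toV : bV B -> gT -> bV B) (toE : bE B -> gT -> bE B) (toH : bH B -> gT -> bH B)
  : Prop :=
  is_act G toV /\ is_act G toE /\ is_act G toH /\
  (forall h g, g \in G -> hv (toH h g) = toV (hv h) g /\ he (toH h g) = toE (he h) g) /\
  (forall h g, g \in G -> succ (toH h g) = toH (succ h) g) /\
  (forall v g, g \in G -> mult (toV v g) = mult v) /\
  (forall g, g \in G -> (forall v, toV v g = v) -> (forall e, toE e g = e) ->
     (forall h, toH h g = h) -> g = 1) /\
  (forall e g, g \in G -> toE e g = e -> g = 1).

Section OrbitGraph.
Variables (gT : finGroupType) (G : {group gT}) (B : bgraph)
  (toV : bV B -> gT -> bV B) (toE : bE B -> gT -> bE B) (toH : bH B -> gT -> bH B).

Definition obV := orbq (orbf toV G).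
Definition obE := orbq (orbf toE G).
Definition obH := orbq (orbf toH G).

Definition ohv (A : obH) : obV := po (orbf toV G) (hv (rep A)).
Definition ohe (A : obH) : obE := po (orbf toE G) (he (rep A)).
Definition osucc (A : obH) : obH := po (orbf toH G) (succ (rep A)).
Definition omult (mu : obV) : nat :=
  (valency (rep mu) * mult (rep mu)) %/ #|[set A : obH | ohv A == mu]|.

Definition orbit_bgraph : bgraph := @BGraph obV obE obH ohv ohe osucc omult.

End OrbitGraph.

Definition orbit_quiver (Q : quiver) (OV : qV Q -> {set qV Q}) (OA : qA Q -> {set qA Q})
  : quiver :=
  @Quiver (orbq OV) (orbq OA)
    (fun A => po OV (qs (rep A))) (fun A => po OV (qt (rep A))).

Definition alab (B : bgraph) (a : qarrT B) : option (bH B) :=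
  match a with inl h => Some (val h) | inr _ => None end.

Definition arrow_orbit (gT : finGroupType) (G : {group gT}) (B : bgraph)
  (toH : bH B -> gT -> bH B) (a : qarrT B) : {set qarrT B} :=
  [set a' | [exists g in G, alab a' == omap (fun h => toH h g) (alab a)]].

From HB Require Import structures.
From mathcomp Require Import all_boot all_order all_fingroup.
Set Implicit Arguments. Unset Strict Implicit. Unset Printing Implicit Defensive.
Local Open Scope group_scope.

(* The vertices of both quivers are literally the G-orbits of edges, so the
   vertex map is the identity.  An arrow of Q_B is either an arrow attached to
   a non-truncated edge occurrence h, or the loop of the special case; its
   orbit is sent to the arrow of the orbit occurrence of h (resp. to the loop).
   The theorem then assembles these facts. *)

Lemma po_rep (T : finType) (O : T -> {set T}) (A : orbq O) : A = po O (rep A).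
Proof. by apply: val_inj; rewrite /= /rep; exact: (eqP (xchooseP (existsP (valP A)))). Qed.

Section OrbitTypes.
Variables (T : finType) (O : T -> {set T}).
Hypothesis O_refl : forall x, x \in O x.
Hypothesis O_closed : forall x y, y \in O x -> O y = O x.

Lemma po_eq x y : y \in O x -> po O y = po O x.
Proof. by move=> yOx; apply: val_inj; exact: O_closed. Qed.

Lemma po_eq_mem x y : po O x = po O y -> y \in O x.
Proof. by move/(congr1 val) => /= ->. Qed.

Lemma rep_po x : rep (po O x) \in O x.
Proof. by have /(congr1 val) /= -> := po_rep (po O x); exact: O_refl. Qed.
End OrbitTypes.

Section GroupOrbits.
Variables (gT : finGroupType) (G : {group gT}) (T : finType) (f : T -> gT -> T).
Hypothesis f_act : is_act G f.

Lemma orbf_refl x : x \in orbf f G x.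
Proof. by apply/imsetP; exists 1; rewrite ?group1 ?f_act.1. Qed.

Lemma orbf_closed x y : y \in orbf f G x -> orbf f G y = orbf f G x.
Proof.
case/imsetP=> g Gg ->; apply/setP => z.
apply/imsetP/imsetP => [[k Gk ->]|[k Gk ->]].
  by exists (g * k); rewrite ?groupM // f_act.2.
exists (g^-1 * k); first by rewrite groupM ?groupV.
by rewrite -f_act.2 ?groupV ?groupM ?groupV // mulgA mulgV mul1g.
Qed.

Lemma orbf_rep x : exists2 g, g \in G & rep (po (orbf f G) x) = f x g.
Proof. by have /imsetP[g Gg ->] := rep_po orbf_refl x; exists g. Qed.

Lemma po_act x g : g \in G -> po (orbf f G) (f x g) = po (orbf f G) x.
Proof. by move=> Gg; apply: (po_eq orbf_closed); apply/imsetP; exists g. Qed.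

Lemma act_inj g : g \in G -> injective (f^~ g).
Proof.
move=> Gg x y /(congr1 (f^~ g^-1)) /=.
by rewrite -!f_act.2 ?groupV // mulgV !f_act.1.
Qed.
End GroupOrbits.

Lemma special_edge_eq (B : bgraph) (e e' : bE B) : special B -> e = e'.
Proof.
by case/andP=> /eqP/fintype1[e0 all_e0] _; rewrite (all_e0 e) (all_e0 e').
Qed.

(* A Brauer graph in which every occurrence is truncated consists of a single
   edge: each vertex then carries one occurrence, so the endpoints of a fixed
   edge form a union of adjacency classes, hence all vertices by connectedness.
   This shows that "special" is detected by truncation alone. *)
Definition endpoint (B : bgraph) (e : bE B) : pred (bV B) :=
  [pred v | [exists h, (he h == e) && (hv h == v)]].

Section AllTruncated.
Variable B : bgraph.
Hypothesis B_brauer : is_brauer B.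
Hypothesis all_truncated : forall h : bH B, truncated h.

Let two_occurrences : forall e : bE B, #|[set h | he h == e]| = 2%N.
Proof. by case: B_brauer. Qed.
Let connected : forall u v : bV B, connect (@badj B) u v.
Proof. by case: B_brauer => _ [_ [_ [_ [_ []]]]]. Qed.
Let has_edge : (0 < #|bE B|)%N.
Proof. by case: B_brauer => _ [_ [_ [_ [_ [_ []]]]]]. Qed.

Lemma occurrence_at_vertex_uniq (h h' : bH B) : hv h = hv h' -> h = h'.
Proof.
move=> hvE; have /andP[/eqP/eqP/cards1P[k Ek] _] := all_truncated h.
have : h \in [set k | hv k == hv h] by rewrite inE.
have : h' \in [set k | hv k == hv h] by rewrite inE hvE.
by rewrite Ek !inE => /eqP -> /eqP ->.
Qed.

Lemma edge_has_occurrence (e : bE B) : exists h, he h = e.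
Proof.
have : (0 < #|[set h | he h == e]|)%N by rewrite two_occurrences.
by case/card_gt0P => h; rewrite inE => /eqP; exists h.
Qed.

Lemma endpoint_closed (e : bE B) : closed (@badj B) (endpoint e).
Proof.
have fwd (x y : bV B) : badj x y -> endpoint e x -> endpoint e y.
  case/existsP=> h /existsP[h' /and4P[_ /eqP hE /eqP hx /eqP h'y]].
  case/existsP=> k /andP[/eqP kE /eqP kx]; apply/existsP; exists h'.
  have hk : h = k by apply: occurrence_at_vertex_uniq; rewrite hx kx.
  by rewrite -hE hk kE h'y !eqxx.
have badj_sym (x y : bV B) : badj x y -> badj y x.
  case/existsP=> h /existsP[h' /and4P[hh' hE hx h'y]].
  by apply/existsP; exists h'; apply/existsP; exists h; rewrite eq_sym hh' eq_sym hE h'y hx.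
move=> x y xy /=; apply/idP/idP; first exact: fwd.
exact: fwd (badj_sym _ _ xy).
Qed.

Lemma all_truncated_single_edge : #|bE B| = 1%N.
Proof.
have [e0 _] := card_gt0P has_edge.
have [h0 h0E] := edge_has_occurrence e0.
suff all_e0 (e : bE B) : e = e0.
  by apply: (@eq_card1 _ e0) => e; rewrite !inE (all_e0 e) eqxx.
have [k <-] := edge_has_occurrence e.
have : hv k \in endpoint e0.
  rewrite -(closed_connect (endpoint_closed e0) (connected (hv h0) (hv k))).
  by apply/existsP; exists h0; rewrite h0E !eqxx.
by case/existsP=> h /andP[/eqP <- /eqP/occurrence_at_vertex_uniq ->].
Qed.
End AllTruncated.

Section OrbitGraph.
Variables (gT : finGroupType) (G : {group gT}) (B : bgraph)
  (toV : bV B -> gT -> bV B) (toE : bE B -> gT -> bE B) (toH : bH B -> gT -> bH B).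
Hypothesis action : @free_brauer_action gT G B toV toE toH.

Local Notation Bb := (@orbit_bgraph gT G B toV toE toH).
Local Notation OV := (orbf toV G).
Local Notation OE := (orbf toE G).
Local Notation OH := (orbf toH G).

Let actV : is_act G toV. Proof. by case: action. Qed.
Let actE : is_act G toE. Proof. by case: action => _ []. Qed.
Let actH : is_act G toH. Proof. by case: action => _ [_ []]. Qed.
Let incidence : forall h g, g \in G ->
  hv (toH h g) = toV (hv h) g /\ he (toH h g) = toE (he h) g.
Proof. by case: action => _ [_ [_ []]]. Qed.
Let succ_act : forall h g, g \in G -> succ (toH h g) = toH (succ h) g.
Proof. by case: action => _ [_ [_ [_ []]]]. Qed.
Let mult_act : forall v g, g \in G -> mult (toV v g) = mult v.
Proof. by case: action => _ [_ [_ [_ [_ []]]]]. Qed.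

Lemma ohv_po h : ohv toV (po OH h) = po OV (hv h).
Proof. by rewrite /ohv; have [g Gg ->] := orbf_rep actH h; rewrite (incidence h Gg).1 po_act. Qed.

Lemma ohe_po h : ohe toE (po OH h) = po OE (he h).
Proof.
rewrite /ohe; have [g Gg ->] := orbf_rep actH h.
by rewrite (incidence h Gg).2 po_act.
Qed.

Lemma osucc_po h : osucc (po OH h) = po OH (succ h).
Proof. by rewrite /osucc; have [g Gg ->] := orbf_rep actH h; rewrite succ_act // po_act. Qed.

(* translation by g maps the occurrences at v into those at v^g *)
Lemma valency_act_le v g : g \in G -> (valency v <= valency (toV v g))%N.
Proof.
move=> Gg; rewrite /valency -(card_imset _ (act_inj actH Gg)).
apply: subset_leq_card; apply/subsetP => x /imsetP[h]; rewrite !inE => /eqP hv_h ->.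
by rewrite (incidence h Gg).1 hv_h.
Qed.

Lemma valency_act v g : g \in G -> valency (toV v g) = valency v.
Proof.
move=> Gg; apply/eqP; rewrite eqn_leq valency_act_le // andbT.
by have := valency_act_le (toV v g) (groupVr Gg); rewrite -actV.2 ?groupV // mulgV actV.1.
Qed.

Lemma omult_po v :
  omult toH (po OV v) = (valency v * mult v) %/ valency (B := Bb) (po OV v).
Proof. by rewrite /omult; have [g Gg ->] := orbf_rep actV v; rewrite valency_act // mult_act. Qed.

(* every occurrence orbit at the orbit of v contains an occurrence at v *)
Lemma orbit_valency_le v : (valency (B := Bb) (po OV v) <= valency v)%N.
Proof.
apply: leq_trans (leq_imset_card (po OH) [set k | hv k == v]).
apply: subset_leq_card; apply/subsetP => A; rewrite inE => /eqP hvA.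
have /imsetP[k Gk hv_k] := po_eq_mem (orbf_refl actV) hvA.
apply/imsetP; exists (toH (rep A) k); first by rewrite inE (incidence _ Gk).1 -hv_k.
by rewrite {1}(po_rep A) po_act.
Qed.

(* an occurrence is truncated iff its orbit is: the orbit multiplicity is
   valency * multiplicity divided by the orbit valency, which lies between 1
   and the valency *)
Lemma truncated_po h : truncated (po OH h : bH Bb) = truncated h.
Proof.
rewrite /truncated /= ohv_po omult_po.
have vb_gt0 : (0 < valency (B := Bb) (po OV (hv h)))%N.
  by apply/card_gt0P; exists (po OH h); rewrite inE /= ohv_po.
have vb_le := orbit_valency_le (hv h).
case: (eqVneq (valency (B := Bb) (po OV (hv h))) 1%N) => [->|vb_neq1].
  by rewrite divn1 muln_eq1.
case: (eqVneq (valency (hv h)) 1%N) => [v1|]; last by [].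
by move: vb_neq1; rewrite eqn_leq vb_gt0 -v1 vb_le.
Qed.

(* B is special iff its orbit graph is; the converse direction needs the
   single-edge criterion for graphs with only truncated occurrences *)
Lemma special_orbit_graph : special B -> special Bb.
Proof.
case/andP => /eqP B1 /forallP B_trunc; apply/andP; split.
  have [e0 all_e0] := fintype1 B1; apply/eqP.
  by apply: (@eq_card1 _ (po OE e0)) => A; rewrite !inE (po_rep A) (all_e0 (rep A)) eqxx.
by apply/forallP => A; rewrite (po_rep A) truncated_po.
Qed.

Lemma special_of_orbit_graph : is_brauer B -> special Bb -> special B.
Proof.
move=> B_brauer /andP[_ /forallP Bb_trunc].
have B_trunc (h : bH B) : truncated h by rewrite -truncated_po.
by apply/andP; split; [rewrite all_truncated_single_edge | exact/forallP].
Qed.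
End OrbitGraph.

Section ArrowOrbits.
Variables (gT : finGroupType) (G : {group gT}) (B : bgraph)
  (toV : bV B -> gT -> bV B) (toE : bE B -> gT -> bE B) (toH : bH B -> gT -> bH B).
Hypothesis B_brauer : is_brauer B.
Hypothesis action : @free_brauer_action gT G B toV toE toH.

Local Notation Bb := (@orbit_bgraph gT G B toV toE toH).
Local Notation OE := (orbf toE G).
Local Notation OH := (orbf toH G).
Local Notation AO := (arrow_orbit G toH).

Let actH : is_act G toH. Proof. by case: action => _ [_ []]. Qed.

Definition label_act (o : option (bH B)) (g : gT) : option (bH B) := omap (toH^~ g) o.

Lemma label_act_is_act : is_act G label_act.
Proof.
split=> [[h|]|[h|] g k Gg Gk] //=; first by rewrite actH.1.
by rewrite actH.2.
Qed.

Lemma arrow_orbitE a : AO a = [set a' | alab a' \in orbf label_act G (alab a)].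
Proof.
apply/setP => a'; rewrite !inE; apply/existsP/imsetP.
  by case=> g /andP[Gg /eqP a'E]; exists g.
by case=> g Gg a'E; exists g; rewrite Gg a'E /=.
Qed.

Lemma arrow_orbit_refl a : a \in AO a.
Proof. by rewrite arrow_orbitE inE; exact: orbf_refl label_act_is_act _. Qed.

Lemma arrow_orbit_closed a a' : a' \in AO a -> AO a' = AO a.
Proof. by rewrite !arrow_orbitE inE => /(orbf_closed label_act_is_act) ->. Qed.

Lemma label_rep a : alab (rep (po AO a)) \in orbf label_act G (alab a).
Proof. by have := rep_po arrow_orbit_refl a; rewrite arrow_orbitE inE. Qed.

Lemma orbit_not_truncated (k : {h : bH B | ~~ truncated h}) :
  ~~ truncated (po OH (val k) : bH Bb).
Proof. by rewrite (truncated_po action); exact: valP k. Qed.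

Lemma rep_not_truncated (A : {A : bH Bb | ~~ truncated A}) : ~~ truncated (rep (val A)).
Proof. by have := valP A; rewrite {1}(po_rep (val A)) (truncated_po action). Qed.

Definition orbit_arrow (A : orbq AO) : qarrT Bb :=
  match rep A with
  | inl k => inl (exist _ (po OH (val k) : bH Bb) (orbit_not_truncated k))
  | inr e => inr (exist _ (po OE (val e) : bE Bb) (special_orbit_graph action (valP e)))
  end.

Definition orbit_arrow_inv (x : qarrT Bb) : orbq AO :=
  match x with
  | inl A => po AO (inl (exist _ (rep (val A)) (rep_not_truncated A)))
  | inr e => po AO (inr (exist _ (rep (val e))
                          (special_of_orbit_graph action B_brauer (valP e))))
  end.

Lemma orbit_arrow_qarr k :
  orbit_arrow (po AO (inl k)) = inl (exist _ (po OH (val k) : bH Bb) (orbit_not_truncated k)).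
Proof.
have := label_rep (inl k); rewrite /orbit_arrow.
case: (rep _) => [k'|e] /imsetP[g Gg //= [k'E]].
by congr inl; apply: val_inj; rewrite /= k'E po_act.
Qed.

Lemma orbit_arrowK : cancel orbit_arrow orbit_arrow_inv.
Proof.
move=> A; rewrite [RHS]po_rep /orbit_arrow.
case: (rep A) => [k|e] /=; apply: (po_eq arrow_orbit_closed); rewrite arrow_orbitE inE /=.
  by have [g Gg ->] := orbf_rep actH (val k); apply/imsetP; exists g.
exact: orbf_refl label_act_is_act _.
Qed.

Lemma orbit_arrow_loop e :
  orbit_arrow (po AO (inr e))
  = inr (exist _ (po OE (val e) : bE Bb) (special_orbit_graph action (valP e))).
Proof.
have := label_rep (inr e); rewrite /orbit_arrow.
case: (rep _) => [k|e'] /imsetP[g _ //] _.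
by congr inr; apply: val_inj; apply: special_edge_eq (special_orbit_graph action (valP e)).
Qed.

Lemma orbit_arrow_invK : cancel orbit_arrow_inv orbit_arrow.
Proof.
case=> [A|e] /=.
  by rewrite orbit_arrow_qarr; congr inl; apply: val_inj; rewrite /= -po_rep.
by rewrite orbit_arrow_loop; congr inr; apply: val_inj; apply: special_edge_eq (valP e).
Qed.

Lemma orbit_arrow_ends A :
  qsrcB (orbit_arrow A) = po OE (qsrcB (rep A)) /\
  qtgtB (orbit_arrow A) = po OE (qtgtB (rep A)).
Proof.
rewrite /orbit_arrow; case: (rep A) => [k|e] //=.
by rewrite (osucc_po action) !(ohe_po action).
Qed.
End ArrowOrbits.

Theorem proposition2p8 (gT : finGroupType) (G : {group gT}) (B : bgraph)
  (toV : bV B -> gT -> bV B) (toE : bE B -> gT -> bE B) (toH : bH B -> gT -> bH B) :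
  abelian G -> is_brauer B -> @free_brauer_action gT G B toV toE toH ->
  let Bb := @orbit_bgraph gT G B toV toE toH in
  let OQ := orbit_quiver (Q := QB B) (orbf toE G) (arrow_orbit G toH) in
  exists (f0 : qV OQ -> qV (QB Bb)) (f1 : qA OQ -> qA (QB Bb)),
    [/\ bijective f0, bijective f1,
        (forall a, qs (f1 a) = f0 (qs a)) /\ (forall a, qt (f1 a) = f0 (qt a)),
        (forall e : bE B, f0 (po (orbf toE G) e) = (po (orbf toE G) e : bE Bb)) &
        (forall h : bH B, truncated (po (orbf toH G) h : bH Bb) = truncated h) /\
        (forall (h : bH B) (Hh : ~~ truncated h)
                (Hb : ~~ truncated (po (orbf toH G) h : bH Bb)),
           f1 (po (arrow_orbit G toH) (qarr Hh)) = qarr Hb)].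
Proof.
move=> _ B_brauer action Bb OQ.
(* both quivers have the edge orbits as vertices *)
exists id, (orbit_arrow action); split.
- by exists id.
- by exists (orbit_arrow_inv B_brauer action); [exact: orbit_arrowK | exact: orbit_arrow_invK].
- by split=> a; have [src tgt] := orbit_arrow_ends action a.
- by [].
- split=> [h|h Hh Hb]; first exact: truncated_po.
  by rewrite /qarr orbit_arrow_qarr; congr inl; apply: val_inj.
Qed.
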